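(* Let $A=\begin{pmatrix}\alpha&0\\\beta&0\end{pmatrix}$ and $B=\begin{pmatrix}0&\gamma\\0&\delta\end{pmatrix}$ be rank-one matrices in $M_2(\mathbb C)$. Then every matrix in $A^\perp\cap B^\perp$ has rank at most one if and only if $(\alpha,\beta)\in\mathbb C(\gamma,\delta)\setminus\{0\}$.
   Context: $M_2(\mathbb C)$ carries the operator (spectral) norm. $X\perp Y$ (Birkhoff–James orthogonality) means $\|X+\lambda Y\|\ge\|X\|$ for all $\lambda\in\mathbb C$, and $X^\perp:=\{Y: X\perp Y\}$. *)

From HB Require Import structures.
From mathcomp Require Import all_boot all_order all_algebra.
From mathcomp Require Import complex.
From mathcomp Require Import classical_sets reals.
Set Implicit Arguments. Unset Strict Implicit. Unset Printing Implicit Defensive.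
Import Order.TTheory GRing.Theory Num.Theory.
Local Open Scope ring_scope.
Local Open Scope classical_set_scope.

Definition vnorm (R : realType) (x : 'cV[R[i]]_2) : R :=
  Num.sqrt (\sum_(k < 2) ((@complex.Re R (x k 0)) ^+ 2 + (@complex.Im R (x k 0)) ^+ 2)).

Definition opnorm (R : realType) (M : 'M[R[i]]_2) : R :=
  sup [set r : R | exists x : 'cV[R[i]]_2, vnorm x = 1 /\ r = vnorm (M *m x)].

Definition BJ_orth (R : realType) (X Y : 'M[R[i]]_2) : Prop :=
  forall lambda : R[i], opnorm (X + lambda *: Y) >= opnorm X.

Definition BJ_perp (R : realType) (X : 'M[R[i]]_2) : set 'M[R[i]]_2 :=
  [set Y | BJ_orth X Y].

From HB Require Import structures.
From mathcomp Require Import all_boot all_order all_algebra.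
From mathcomp Require Import complex.
From mathcomp Require Import classical_sets reals.
From mathcomp Require Import ring lra.
Import Order.TTheory GRing.Theory Num.Theory.
Set Implicit Arguments. Unset Strict Implicit. Unset Printing Implicit Defensive.
Local Open Scope ring_scope.
Local Open Scope complex_scope.

(* Let A be supported on its k-th column a = A e_k. Then ||A|| = |a|, and A is
   Birkhoff-James orthogonal to Y iff z := <a, Y e_k> = 0. If z = 0, testing on
   e_k gives |(A + l Y) e_k|^2 = |a|^2 + |l|^2 |Y e_k|^2 >= |a|^2. If z <> 0, the
   direction l = -t conj(z) gives |(A + l Y) x|^2 <= |a|^2 - t |z|^2 / 2 for
   every unit vector x once t > 0 is small, so ||A + l Y|| < ||A||.
   Hence, with a = (alpha, beta) and b = (gamma, delta), A^perp /\ B^perp is the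
   set of Y with <a, Y e_0> = <b, Y e_1> = 0. If a = c b, then a* Y = 0 with
   a <> 0, so Y is singular. Otherwise the matrix with columns
   (conj beta, -conj alpha) and (conj delta, -conj gamma) lies in the
   intersection and has determinant conj(alpha delta - beta gamma) <> 0. *)

Lemma ord2P (i : 'I_2) : i = 0 \/ i = 1.
Proof. by case: i => [[|[|//]] ?]; [left | right]; apply: val_inj. Qed.

Lemma sum_ord2 (V : nmodType) (F : 'I_2 -> V) (k j : 'I_2) :
  k != j -> \sum_(i < 2) F i = F k + F j.
Proof.
rewrite big_ord_recl big_ord1 (_ : lift ord0 ord0 = 1); last exact: val_inj.
by case: (ord2P k) (ord2P j) => -> [] -> //= _; rewrite addrC.
Qed.

Lemma mulmx2_colE (K : comPzRingType) (m : nat) (M : 'M[K]_(m, 2)) (x : 'cV_2) k j :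
  k != j -> M *m x = x k 0 *: col k M + x j 0 *: col j M.
Proof.
by move=> kj; apply/colP => i; rewrite !mxE (sum_ord2 _ kj) mulrC [_ * x j 0]mulrC.
Qed.

Lemma det_mx22 (K : comPzRingType) (A : 'M[K]_2) :
  \det A = A 0 0 * A 1 1 - A 0 1 * A 1 0.
Proof.
rewrite (expand_det_row _ 0) !big_ord_recl big_ord0 addr0 /cofactor !det_mx11 !mxE /=.
rewrite expr0 expr1 mul1r mulN1r mulrN.
by congr (A _ _ * A _ _ - A _ _ * A _ _); apply: val_inj.
Qed.

Lemma ltn_mxrank_det (F : fieldType) n (A : 'M[F]_n) : (\rank A < n)%N = (\det A == 0).
Proof.
by rewrite ltn_neqAle rank_leq_row andbT -[_ == n]/(row_free A) row_free_unit unitmxE unitfE negbK.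
Qed.

Lemma proportional_of_cross_eq0 (F : fieldType) (a0 a1 b0 b1 : F) :
  (b0, b1) <> (0, 0) -> a0 * b1 - a1 * b0 = 0 -> exists c, a0 = c * b0 /\ a1 = c * b1.
Proof.
move=> b_neq0 /eqP; rewrite subr_eq0 => /eqP cross.
have [b0_0 | b0_neq0] := eqVneq b0 0.
  have b1_neq0 : b1 != 0 by apply/eqP => b1_0; apply: b_neq0; rewrite b0_0 b1_0.
  exists (a1 / b1); rewrite divfK //; split=> //; apply: (mulIf b1_neq0).
  by rewrite cross b0_0 !mulr0 mul0r.
exists (a0 / b0); rewrite divfK //; split=> //; apply: (mulIf b0_neq0).
by rewrite mulrAC divfK // cross.
Qed.

Lemma exists_pos_mul_le2 (R : realFieldType) (c1 c2 M1 M2 : R) :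
  0 < c1 -> 0 < c2 -> 0 <= M1 -> 0 <= M2 ->
  exists2 t, 0 < t & t * M1 <= c1 /\ t * M2 <= c2.
Proof.
move=> c1_gt0 c2_gt0 M1_ge0 M2_ge0.
have D_gt0 : 0 < M1 / c1 + M2 / c2 + 1.
  by have := divr_ge0 M1_ge0 (ltW c1_gt0); have := divr_ge0 M2_ge0 (ltW c2_gt0); lra.
exists (M1 / c1 + M2 / c2 + 1)^-1; first by rewrite invr_gt0.
have [e1 e2] : M1 = c1 * (M1 / c1) /\ M2 = c2 * (M2 / c2).
  by rewrite !(mulrC c1) !(mulrC c2) !divfK ?gt_eqF.
have := divr_ge0 M1_ge0 (ltW c1_gt0); have := divr_ge0 M2_ge0 (ltW c2_gt0).
by split; rewrite mulrC ler_pdivrMr //; [rewrite {1}e1 | rewrite {1}e2]; nra.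
Qed.

Section ComplexModulus.
Variable R : rcfType.
Implicit Types x y : R[i].

Definition normc2 x : R := complex.Re x ^+ 2 + complex.Im x ^+ 2.

Lemma normc2_ge0 x : 0 <= normc2 x.
Proof. by rewrite addr_ge0 ?sqr_ge0. Qed.

Lemma normc2_eq0 x : (normc2 x == 0) = (x == 0).
Proof.
by case: x => a b; rewrite /normc2 paddr_eq0 ?sqr_ge0 // !sqrf_eq0 eq_complex.
Qed.

Lemma normc2M x y : normc2 (x * y) = normc2 x * normc2 y.
Proof. by case: x y => a b [c d]; rewrite /normc2 /=; ring. Qed.

Lemma normc2D x y : normc2 (x + y) = normc2 x + normc2 y + 2 * complex.Re (x^* * y).
Proof. by case: x y => a b [c d]; rewrite /normc2 /=; ring. Qed.

Lemma normc2D_le x y : normc2 (x + y) <= 2 * (normc2 x + normc2 y).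
Proof.
case: x y => a b [c d]; rewrite /normc2 /=.
by have := sqr_ge0 (a - c); have := sqr_ge0 (b - d); nra.
Qed.

Lemma normc2_real (r : R) : normc2 r%:C = r ^+ 2.
Proof. by rewrite /normc2 /= expr0n addr0. Qed.

Lemma Re_mulJ_ge x y : - (normc2 x + normc2 y) <= 2 * complex.Re (x^* * y).
Proof.
case: x y => a b [c d]; rewrite /normc2 /=.
by have := sqr_ge0 (a + c); have := sqr_ge0 (b + d); nra.
Qed.

Lemma Re_real_mulJD (r : R) x y :
  complex.Re (r%:C * (x^* * (x + y))) = r * (normc2 x + complex.Re (x^* * y)).
Proof. by case: x y => a b [c d]; rewrite /normc2 /=; ring. Qed.

End ComplexModulus.

Section HermitianVectors.
Variables (R : rcfType) (n : nat).
Implicit Types (u v : 'cV[R[i]]_n) (c : R[i]).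

Definition cdot u v : R[i] := \sum_i (u i 0)^* * v i 0.

Definition vnorm2 u : R := \sum_i normc2 (u i 0).

Lemma cdotDr u v v' : cdot u (v + v') = cdot u v + cdot u v'.
Proof. by rewrite /cdot -big_split; apply: eq_bigr => i _; rewrite mxE mulrDr. Qed.

Lemma cdotZr c u v : cdot u (c *: v) = c * cdot u v.
Proof. by rewrite /cdot mulr_sumr; apply: eq_bigr => i _; rewrite mxE mulrCA. Qed.

Lemma cdotZl c u v : cdot (c *: u) v = c^* * cdot u v.
Proof. by rewrite /cdot mulr_sumr; apply: eq_bigr => i _; rewrite mxE rmorphM mulrA. Qed.

Lemma cdot0l v : cdot 0 v = 0.
Proof. by rewrite /cdot big1 // => i _; rewrite mxE rmorph0 mul0r. Qed.

Lemma vnorm2_ge0 u : 0 <= vnorm2 u.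
Proof. by apply: sumr_ge0 => i _; exact: normc2_ge0. Qed.

Lemma vnorm2_eq0 u : (vnorm2 u == 0) = (u == 0).
Proof.
rewrite psumr_eq0; last by move=> i _; exact: normc2_ge0.
apply/allP/eqP => [u0 | -> i _]; last by rewrite mxE (normc2_eq0 0) eqxx.
apply/colP => i; apply/eqP; rewrite mxE -normc2_eq0.
by have /implyP := u0 i (mem_index_enum i); apply.
Qed.

Lemma vnorm2Z c u : vnorm2 (c *: u) = normc2 c * vnorm2 u.
Proof. by rewrite /vnorm2 mulr_sumr; apply: eq_bigr => i _; rewrite mxE normc2M. Qed.

Lemma vnorm2D u v : vnorm2 (u + v) = vnorm2 u + vnorm2 v + 2 * complex.Re (cdot u v).
Proof.
rewrite /vnorm2 /cdot raddf_sum mulr_sumr -!big_split.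
by apply: eq_bigr => i _; rewrite mxE normc2D.
Qed.

Lemma vnorm2D_le u v : vnorm2 (u + v) <= 2 * (vnorm2 u + vnorm2 v).
Proof.
rewrite /vnorm2 -big_split mulr_sumr; apply: ler_sum => i _.
by rewrite mxE normc2D_le.
Qed.

Lemma vnorm2_delta k : vnorm2 (delta_mx k 0 : 'cV[R[i]]_n) = 1.
Proof.
rewrite /vnorm2 (bigD1 k) //= big1 => [|i /negPf ik]; rewrite mxE.
  by rewrite !eqxx normc2_real expr1n addr0.
by rewrite ik normc2_real expr0n.
Qed.

End HermitianVectors.

Lemma det_eq0_of_cdot_col (R : rcfType) n (a : 'cV[R[i]]_n) (Y : 'M_n) :
  a != 0 -> (forall l, cdot a (col l Y) = 0) -> \det Y = 0.
Proof.
move=> a_neq0 aY; apply/eqP/det0P; exists (\row_i (a i 0)^*).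
  apply: contraNneq a_neq0 => /rowP a0; apply/eqP/colP => i.
  by move: (a0 i); rewrite !mxE => /eqP; rewrite conjc_eq0 => /eqP.
apply/rowP => l; rewrite [RHS]mxE -(aY l) mxE.
by apply: eq_bigr => i _; rewrite !mxE.
Qed.

Lemma vnorm2_ord2 (R : rcfType) (x : 'cV[R[i]]_2) k j :
  k != j -> vnorm2 x = normc2 (x k 0) + normc2 (x j 0).
Proof. exact: sum_ord2. Qed.

Section Perturbation.
Variables (R : rcfType) (n : nat) (a y w : 'cV[R[i]]_n).
Local Notation z := (cdot a y).
Local Notation z' := (cdot a w).

(* With v := p y + q w, the first-order term of |p a - t conj(z) v|^2 in t is
   -2 t (|p z|^2 + Re (conj(p z) q z')); the two smallness conditions make the
   second-order term and the part proportional to |q|^2 harmless. *)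
Lemma vnorm2_perturb_le (p q : R[i]) (t : R) :
  normc2 p + normc2 q = 1 -> 0 <= t ->
  t * (normc2 z + normc2 z') <= vnorm2 a -> t * (4 * (vnorm2 y + vnorm2 w)) <= 1 ->
  vnorm2 (p *: a - (t%:C * z^*) *: (p *: y + q *: w)) <= vnorm2 a - t * normc2 z / 2.
Proof.
move=> pq1 t_ge0 small_zz' small_yw.
set v := p *: y + q *: w.
have cross : complex.Re (cdot (p *: a) (- (t%:C * z^*) *: v))
    = - t * (normc2 (p * z) + complex.Re ((p * z)^* * (q * z'))).
  rewrite cdotZl cdotZr cdotDr !cdotZr -Re_real_mulJD.
  by congr complex.Re; rewrite rmorphN rmorphM /=; ring.
have normc2_l : normc2 (- (t%:C * z^*)) = t ^+ 2 * normc2 z.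
  by move: (cdot a y) => [? ?]; rewrite /normc2 /=; ring.
have [p_ge0 q_ge0] := (normc2_ge0 p, normc2_ge0 q).
have v_le : vnorm2 v <= 2 * (vnorm2 y + vnorm2 w).
  apply: le_trans (vnorm2D_le _ _) _; rewrite !vnorm2Z.
  have := vnorm2_ge0 y; have := vnorm2_ge0 w; nra.
have cross_ge := Re_mulJ_ge (p * z) (q * z').
rewrite !normc2M in cross_ge.
rewrite -scaleNr vnorm2D !vnorm2Z cross normc2_l normc2M.
have [Z_ge0 W_ge0] := (normc2_ge0 z, normc2_ge0 z').
have tZ_ge0 : 0 <= t ^+ 2 * normc2 z by rewrite mulr_ge0 ?exprn_ge0.
have := ler_wpM2l tZ_ge0 v_le; have := ler_wpM2l t_ge0 cross_ge.
rewrite -subr_ge0 in small_zz'; rewrite -subr_ge0 in small_yw.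
have := mulr_ge0 q_ge0 small_zz'; have := mulr_ge0 (mulr_ge0 t_ge0 Z_ge0) small_yw.
nra.
Qed.

End Perturbation.

Section Orthogonal2.
Variable R : rcfType.

Definition vec2 (x y : R[i]) : 'cV[R[i]]_2 := \col_i (if i == 0 then x else y).

Lemma cdot_vec2 (x y : R[i]) (v : 'cV_2) : cdot (vec2 x y) v = x^* * v 0 0 + y^* * v 1 0.
Proof. by rewrite /cdot (sum_ord2 _ (isT : (0 : 'I_2) != 1)) !mxE. Qed.

Definition orth2mx (x y u v : R[i]) : 'M[R[i]]_2 :=
  \matrix_(i, j) (if j == 0 then vec2 y^* (- x^*) else vec2 v^* (- u^*)) i 0.

Lemma vec2Z c x y : vec2 (c * x) (c * y) = c *: vec2 x y.
Proof. by apply/colP => i; rewrite !mxE; case: ifP. Qed.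

Lemma cdot_orth2mx x y u v :
  cdot (vec2 x y) (col 0 (orth2mx x y u v)) = 0 /\ cdot (vec2 u v) (col 1 (orth2mx x y u v)) = 0.
Proof. by rewrite !cdot_vec2 !mxE /= !mulrN; split; rewrite mulrC subrr. Qed.

Lemma det_orth2mx x y u v : \det (orth2mx x y u v) = (x * v - y * u)^*.
Proof. by rewrite det_mx22 !mxE /= rmorphB !rmorphM /=; ring. Qed.

Lemma vec2_neq0 x y : (x, y) <> (0, 0) -> vec2 x y != 0.
Proof.
move=> xy_neq0; apply/eqP => v0; apply: xy_neq0.
by move/colP: v0 => v0; move: (v0 0) (v0 1); rewrite !mxE => /= -> ->.
Qed.

End Orthogonal2.

Section OperatorNorm.
Variable R : realType.
Implicit Types (M : 'M[R[i]]_2) (x : 'cV[R[i]]_2).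

Lemma vnormE x : vnorm x = Num.sqrt (vnorm2 x).
Proof. by []. Qed.

Lemma vnorm_eq1 x : vnorm x = 1 -> vnorm2 x = 1.
Proof. by rewrite vnormE => x1; rewrite -[LHS]sqr_sqrtr ?vnorm2_ge0 // x1 expr1n. Qed.

Lemma opnorm_ge M x : vnorm2 x = 1 -> Num.sqrt (vnorm2 (M *m x)) <= opnorm M.
Proof.
move=> x1; apply: ub_le_sup; last by exists x; rewrite vnormE x1 sqrtr1.
exists (Num.sqrt (2 * (vnorm2 (col 0 M) + vnorm2 (col 1 M)))) => _ [x' [/vnorm_eq1 x'1 ->]].
have n01 : (0 : 'I_2) != 1 by [].
rewrite vnormE ler_sqrt ?mulr_ge0 ?addr_ge0 ?vnorm2_ge0 // (mulmx2_colE _ _ n01).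
apply: le_trans (vnorm2D_le _ _) _; rewrite !vnorm2Z ler_pM2l //.
move: x'1; rewrite (vnorm2_ord2 _ n01).
have := normc2_ge0 (x' 0 0); have := normc2_ge0 (x' 1 0).
have := vnorm2_ge0 (col 0 M); have := vnorm2_ge0 (col 1 M); nra.
Qed.

Lemma opnorm_le M (r : R) :
  (forall x, vnorm2 x = 1 -> vnorm2 (M *m x) <= r) -> opnorm M <= Num.sqrt r.
Proof.
move=> Mr; apply: ge_sup => [|_ [x [/vnorm_eq1 x1 ->]]].
  by exists (vnorm (M *m delta_mx 0 0)), (delta_mx 0 0); rewrite vnormE vnorm2_delta sqrtr1.
by rewrite vnormE; apply: ler_wsqrtr; exact: Mr.
Qed.

Lemma opnorm_col_supported M k j :
  k != j -> col j M = 0 -> opnorm M = Num.sqrt (vnorm2 (col k M)).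
Proof.
move=> kj Mj; apply/eqP; rewrite eq_le; apply/andP; split.
  apply: opnorm_le => x x1; rewrite (mulmx2_colE _ _ kj) Mj scaler0 addr0 vnorm2Z.
  rewrite ler_piMl ?vnorm2_ge0 //; move: x1; rewrite (vnorm2_ord2 _ kj).
  by have := normc2_ge0 (x j 0); lra.
by rewrite colE; apply: opnorm_ge; exact: vnorm2_delta.
Qed.

End OperatorNorm.

Lemma BJ_orth_col_supportedP (R : realType) (A Y : 'M[R[i]]_2) k j :
  k != j -> col j A = 0 -> BJ_orth A Y <-> cdot (col k A) (col k Y) = 0.
Proof.
move=> kj Aj; rewrite /BJ_orth (opnorm_col_supported kj Aj).
set a := col k A; set y := col k Y; set w := col j Y; set z := cdot a y.
split=> [AY | z0 l]; last first.
  apply: le_trans (opnorm_ge (A + l *: Y) (vnorm2_delta _ k)).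
  rewrite -colE ler_sqrt ?vnorm2_ge0 // colE mulmxDl -scalemxAl -!colE -/a -/y.
  rewrite vnorm2D vnorm2Z cdotZr -/z z0 mulr0 /=.
  by have := mulr_ge0 (normc2_ge0 l) (vnorm2_ge0 y); lra.
apply/eqP; apply: contraT => z_neq0.
have a_gt0 : 0 < vnorm2 a.
  rewrite lt0r vnorm2_ge0 vnorm2_eq0 andbT; apply: contraNneq z_neq0 => a0.
  by rewrite /z a0 cdot0l.
have z_gt0 : 0 < normc2 z by rewrite lt0r normc2_ge0 normc2_eq0 z_neq0.
have [t t_gt0 [small_zw small_yw]] := exists_pos_mul_le2 a_gt0 ltr01
  (addr_ge0 (normc2_ge0 z) (normc2_ge0 (cdot a w)))
  (mulr_ge0 (ler0n _ 4) (addr_ge0 (vnorm2_ge0 y) (vnorm2_ge0 w))).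
have : opnorm (A + - (t%:C * z^*) *: Y) <= Num.sqrt (vnorm2 a - t * normc2 z / 2).
  apply: opnorm_le => x x1.
  rewrite mulmxDl -scalemxAl !(mulmx2_colE _ x kj) Aj scaler0 addr0 -/a -/y -/w scaleNr.
  apply: vnorm2_perturb_le => //; [by rewrite -(vnorm2_ord2 _ kj) | exact: ltW].
have := mulr_gt0 t_gt0 z_gt0; have := mulr_ge0 (ltW t_gt0) (normc2_ge0 (cdot a w)).
rewrite mulrDr in small_zw.
by move=> ? ? /(le_trans (AY _)); rewrite ler_sqrt; lra.
Qed.

Local Open Scope classical_set_scope.

Theorem lemma5p4 (R : realType) (alpha beta gamma delta : R[i]) :
  let A : 'M[R[i]]_2 := \matrix_(i < 2, j < 2)
      (if j == 0 then (if i == 0 then alpha else beta) else 0) in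
  let B : 'M[R[i]]_2 := \matrix_(i < 2, j < 2)
      (if j == 0 then 0 else (if i == 0 then gamma else delta)) in
  \rank A = 1%N -> \rank B = 1%N ->
  ((forall Y : 'M[R[i]]_2, (BJ_perp A `&` BJ_perp B) Y -> (\rank Y <= 1)%N) <->
   ((exists c : R[i], alpha = c * gamma /\ beta = c * delta) /\
    (alpha, beta) <> (0, 0))).
Proof.
move=> A B rA rB.
have [n01 n10] : (0 : 'I_2) != 1 /\ (1 : 'I_2) != 0 by [].
have [A0 A1] : col 0 A = vec2 alpha beta /\ col 1 A = 0 by split; apply/colP => i; rewrite !mxE.
have [B0 B1] : col 0 B = 0 /\ col 1 B = vec2 gamma delta by split; apply/colP => i; rewrite !mxE.
have ab_neq0 : (alpha, beta) <> (0, 0).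
  case=> a0 b0; move: rA; suff -> : A = 0 by rewrite mxrank0.
  by apply/matrixP => i j; rewrite !mxE a0 b0 !if_same.
have cd_neq0 : (gamma, delta) <> (0, 0).
  case=> c0 d0; move: rB; suff -> : B = 0 by rewrite mxrank0.
  by apply/matrixP => i j; rewrite !mxE c0 d0 !if_same.
have perpE Y : (BJ_perp A `&` BJ_perp B) Y <->
    cdot (vec2 alpha beta) (col 0 Y) = 0 /\ cdot (vec2 gamma delta) (col 1 Y) = 0.
  have := BJ_orth_col_supportedP Y n01 A1; have := BJ_orth_col_supportedP Y n10 B0.
  by rewrite A0 B1 /BJ_perp /setI /= => EB EA; split=> -[/EA hA /EB hB].
split=> [rank_le1 | [[c [ac bd]] _] Y /perpE [YA YB]].
  split=> //; apply: proportional_of_cross_eq0 cd_neq0 _.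
  apply/eqP; rewrite -conjc_eq0 -det_orth2mx -ltn_mxrank_det.
  by apply/rank_le1/perpE; exact: cdot_orth2mx.
rewrite -ltnS ltn_mxrank_det; apply/eqP/(det_eq0_of_cdot_col (vec2_neq0 ab_neq0)) => l.
by case: (ord2P l) => -> //; rewrite ac bd vec2Z cdotZl YB mulr0.
Qed.
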